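(* Let $(E\to M,\rho,\langle\cdot,\cdot\rangle,[\cdot,\cdot])$ be a Courant algebroid, $\mathcal{G}$ a generalized metric and $\operatorname{div}$ a divergence operator on $E$, and let $D$ be a metric generalized connection with divergence $\operatorname{div}$ and pure-type torsion, with total generalized Ricci curvature $\mathrm{Ric}$. Then $\mathrm{Ric}$ is symmetric if and only if the pair $(\mathcal{G},\operatorname{div})$ is compatible, i.e. \[\operatorname{div}([a_\mp,b_\pm])-\mathcal{L}_{\rho a_\mp}(\operatorname{div}b_\pm)+\mathcal{L}_{\rho b_\pm}(\operatorname{div}a_\mp)=0\quad\text{for all }a_\mp\in\Gamma(V_\mp),\ b_\pm\in\Gamma(V_\pm).\]
   Context: A Courant algebroid $(E\to M,\rho,\langle\cdot,\cdot\rangle,[\cdot,\cdot])$: vector bundle $E$ with nondegenerate symmetric form, anchor $\rho:E\to TM$ and bracket on $\Gamma(E)$ with $[a,[b,c]]=[[a,b],c]+[b,[a,c]]$, $\mathcal{L}_{\rho a}\langle b,c\rangle=\langle[a,b],c\rangle+\langle b,[a,c]\rangle$, $2[a,a]=\rho^*d\langle a,a\rangle$. A generalized connection is a linear $D:\Gamma(E)\to\Gamma(E^*\otimes E)$ with $D(fa)=fDa+\rho^*df\otimes a$ and $\rho^*d\langle a,b\rangle=\langle Da,b\rangle+\langle a,Db\rangle$; $D_ba:=(Da)(b)$, $(Da)^*$ is the adjoint of $b\mapsto D_ba$. Naive curvature $\mathcal{R}_0(a,b)c:=D_aD_bc-D_bD_ac-D_{[a,b]}c$. A generalized metric is a self-adjoint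 $\mathcal{G}\in\operatorname{End}E$ with $\mathcal{G}^2=1$; $V_\pm=\ker(\mathcal{G}\mp1)$, $x_\pm:=\tfrac12(1\pm\mathcal{G})x$. $D$ is metric if it preserves $\Gamma(V_\pm)$. A divergence operator is linear $\operatorname{div}:\Gamma(E)\to C^\infty(M)$ with $\operatorname{div}(fa)=f\operatorname{div}a+\mathcal{L}_{\rho a}f$; $D$ has divergence $\operatorname{div}$ if $\operatorname{div}a=\operatorname{tr}(Da)$. Torsion $T(a,b):=D_ab-D_ba-[a,b]+(Da)^*b\in\Gamma(\wedge^3E^* )$ is of pure type if $T\in\Gamma(\wedge^3V_+\oplus\wedge^3V_-)$. Total curvature $\mathcal{R}(a,b):=\mathcal{R}_0(a_+,b_-)+\mathcal{R}_0(a_-,b_+)$; total generalized Ricci curvature $\mathrm{Ric}(a,b):=\operatorname{tr}(c\mapsto\mathcal{R}(c,a)b)$, a section of $E^*\otimes E^*$. *)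

(* Algebraic (Courant–Dorfman style) rendering of a Courant
   algebroid: C plays the role of C^oo(M) (a commutative R-algebra, R the reals),
   X plays the role of Gamma(E) (a C-module), vector fields are R-linear
   derivations of C, and the finite rank of E is recorded by a finite frame. *)
From HB Require Import structures.
From mathcomp Require Import all_boot all_order all_algebra.
From mathcomp Require Import reals.
Set Implicit Arguments. Unset Strict Implicit. Unset Printing Implicit Defensive.
Import Order.TTheory GRing.Theory Num.Theory.
Local Open Scope ring_scope.

Section CourantDefs.
Variables (R : realType) (C : comAlgType R) (X : lmodType C).

Definition is_vector_field (v : C -> C) : Prop :=
  [/\ forall x y : C, v (x + y) = v x + v y,
      forall (r : R) (x : C), v (r *: x) = r *: v x &
      forall x y : C, v (x * y) = x * v y + v x * y].

(* the finite-rank hypothesis: a finite "frame" (e_i, f_i) with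
   x = sum_i <f_i, x> e_i for every section x (E is a finite-rank bundle,
   hence Gamma(E) is finitely generated projective; the coordinate
   functionals are represented through the pairing). *)
Definition is_frame (ip : X -> X -> C) (n : nat) (e f : 'I_n -> X) : Prop :=
  forall x : X, x = \sum_(i < n) ip (f i) x *: e i.

Definition frame_trace (ip : X -> X -> C) (n : nat) (e f : 'I_n -> X)
  (A : X -> X) : C := \sum_(i < n) ip (f i) (A (e i)).

(* Courant algebroid (E -> M, rho, <.,.>, [.,.]).  rho a is the vector field
   rho(a) acting on functions; rho^* d g is encoded through the pairing:
   <rho^* d g, c> = rho c g. *)
Definition courant_algebroid (ip : X -> X -> C) (rho : X -> C -> C)
  (br : X -> X -> X) (n : nat) (e f : 'I_n -> X) : Prop :=
  (forall a b, ip a b = ip b a) /\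
  (forall (k : C) a b c, ip (k *: a + b) c = k * ip a c + ip b c) /\
  is_frame ip e f /\
  (forall a, is_vector_field (rho a)) /\
  (forall (k : C) a b g, rho (k *: a + b) g = k * rho a g + rho b g) /\
  (forall (r : R) a b c, br ((r%:A : C) *: a + b) c
                         = (r%:A : C) *: br a c + br b c) /\
  (forall (r : R) a b c, br c ((r%:A : C) *: a + b)
                         = (r%:A : C) *: br c a + br c b) /\
  (forall a b c, br a (br b c) = br (br a b) c + br b (br a c)) /\
  (forall a b c, rho a (ip b c) = ip (br a b) c + ip b (br a c)) /\
  (forall a c, (ip (br a a) c) *+ 2 = rho c (ip a a)).

Definition generalized_metric (ip : X -> X -> C) (G : X -> X) : Prop :=
  [/\ (forall (k : C) a b, G (k *: a + b) = k *: G a + G b),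
      (forall a b, ip (G a) b = ip a (G b)) &
      (forall a, G (G a) = a)].

Definition pplus (G : X -> X) (x : X) : X := ((2^-1 : R)%:A : C) *: (x + G x).
Definition pminus (G : X -> X) (x : X) : X := ((2^-1 : R)%:A : C) *: (x - G x).

Definition divergence_op (rho : X -> C -> C) (div : X -> C) : Prop :=
  (forall a b, div (a + b) = div a + div b) /\
  (forall (k : C) a, div (k *: a) = k * div a + rho a k).

(* generalized connection; D b a stands for D_b a = (Da)(b) *)
Definition gen_connection (ip : X -> X -> C) (rho : X -> C -> C)
  (D : X -> X -> X) : Prop :=
  [/\ (forall (k : C) b b' a, D (k *: b + b') a = k *: D b a + D b' a),
      (forall b a a', D b (a + a') = D b a + D b a'),
      (forall b (k : C) a, D b (k *: a) = k *: D b a + rho b k *: a) &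
      (forall c a b, rho c (ip a b) = ip (D c a) b + ip a (D c b))].

Definition metric_connection (G : X -> X) (D : X -> X -> X) : Prop :=
  forall a b, (G a = a -> G (D b a) = D b a) /\ (G a = - a -> G (D b a) = - D b a).

Definition has_divergence (ip : X -> X -> C) (n : nat) (e f : 'I_n -> X)
  (D : X -> X -> X) (div : X -> C) : Prop :=
  forall a, div a = frame_trace ip e f (fun b => D b a).

(* torsion as a 3-form: T(a,b,c) = < D_a b - D_b a - [a,b] + (Da)^* b, c >,
   with <(Da)^* b, c> = <b, D_c a> *)
Definition torsion3 (ip : X -> X -> C) (br : X -> X -> X) (D : X -> X -> X)
  (a b c : X) : C :=
  ip (D a b - D b a - br a b) c + ip b (D c a).

(* T lies in wedge^3 V_+ (+) wedge^3 V_- *)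
Definition pure_type_torsion (ip : X -> X -> C) (br : X -> X -> X)
  (G : X -> X) (D : X -> X -> X) : Prop :=
  forall a b c, torsion3 ip br D a b c
    = torsion3 ip br D (pplus G a) (pplus G b) (pplus G c)
      + torsion3 ip br D (pminus G a) (pminus G b) (pminus G c).

Definition naive_curv (br : X -> X -> X) (D : X -> X -> X) (a b c : X) : X :=
  D a (D b c) - D b (D a c) - D (br a b) c.

Definition total_curv (br : X -> X -> X) (G : X -> X) (D : X -> X -> X)
  (a b c : X) : X :=
  naive_curv br D (pplus G a) (pminus G b) c
  + naive_curv br D (pminus G a) (pplus G b) c.

Definition total_ricci (ip : X -> X -> C) (br : X -> X -> X) (n : nat)
  (e f : 'I_n -> X) (G : X -> X) (D : X -> X -> X) (a b : X) : C :=
  frame_trace ip e f (fun c => total_curv br G D c a b).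

Definition compatible_pair (rho : X -> C -> C) (br : X -> X -> X)
  (G : X -> X) (div : X -> C) : Prop :=
  forall a b, ((G a = - a /\ G b = b) \/ (G a = a /\ G b = - b)) ->
    div (br a b) - rho a (div b) + rho b (div a) = 0.

End CourantDefs.

From HB Require Import structures.
From mathcomp Require Import all_boot all_order all_algebra.
From mathcomp Require Import reals ring.
Set Implicit Arguments. Unset Strict Implicit. Unset Printing Implicit Defensive.
Import Order.TTheory GRing.Theory Num.Theory.
Local Open Scope ring_scope.

(* For a in V_- and b in V_+ only the term R_0(c_+, a) b of the total curvature
   survives in Ric(a, b).  Pure type torsion makes the bracket of sections of
   opposite types equal to [u, v] = D_u v - D_v u, so D_a b = [a, b]_+, and with
     tr (D_a o T) = rho_a (tr T) + tr (T o D_a)   and   div y = tr (c |-> D_{c_+} y)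
   for y in V_+ one gets
     Ric(a, b) = div [a, b]_+ - rho_a (div b) - tr (c |-> D_{D_{c_+} a} b).
   Replacing G by -G swaps V_+ and V_- and leaves Ric unchanged, giving the
   same formula for Ric(b, a); the two trace terms agree by tr (AB) = tr (BA), so
   Ric(a, b) - Ric(b, a) is exactly the compatibility expression.  Since Ric
   vanishes on V_+ x V_+ and on V_- x V_-, its symmetry reduces to mixed pairs. *)

Section AdditiveFunctions.
Variables (U V : zmodType) (g : U -> V).
Hypothesis gD : {morph g : x y / x + y}.

Lemma additive0 : g 0 = 0.
Proof. by apply: (addrI (g 0)); rewrite -gD !addr0. Qed.

Lemma additiveN : {morph g : x / - x}.
Proof. by move=> x; apply: (addrI (g x)); rewrite -gD !subrr additive0. Qed.

Lemma additiveB : {morph g : x y / x - y}.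
Proof. by move=> x y; rewrite gD additiveN. Qed.

Lemma additive_sum I r (P : pred I) F :
  g (\sum_(i <- r | P i) F i) = \sum_(i <- r | P i) g (F i).
Proof. exact: (big_morph g gD additive0). Qed.

End AdditiveFunctions.

Lemma linear_forD (R : pzRingType) (U : lmodType R) (V : zmodType)
    (s : GRing.Scale.law R V) (g : U -> V) :
  linear_for s g -> {morph g : x y / x + y}.
Proof. by move=> gL; case: (GRing.semilinear_linear gL). Qed.


Section CourantAlgebroid.
Variables (R : realType) (C : comAlgType R) (X : lmodType C).
Variables (ip : X -> X -> C) (rho : X -> C -> C) (br : X -> X -> X).
Variables (n : nat) (e f : 'I_n -> X) (div : X -> C) (D : X -> X -> X).
Hypothesis courant : courant_algebroid ip rho br e f.
Hypothesis div_op : divergence_op rho div.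
Hypothesis connection : gen_connection ip rho D.
Hypothesis D_div : has_divergence ip e f D div.

Local Notation half := ((2^-1 : R)%:A : C).
Local Notation tr := (frame_trace ip e f).

Lemma half_add : half + half = 1.
Proof.
have halves : 2^-1 + 2^-1 = 1 :> R by rewrite [RHS]splitr mul1r.
by rewrite -scalerDl halves scale1r.
Qed.

Lemma scale_half_double (x : X) : half *: (x + x) = x.
Proof. by rewrite scalerDr -scalerDl half_add scale1r. Qed.

Lemma double_eq0 (x : C) : x + x = 0 -> x = 0.
Proof. by move=> x0; rewrite -[x]mul1r -half_add mulrDl -mulrDr x0 mulr0. Qed.

Lemma ipC a b : ip a b = ip b a.
Proof. by case: courant. Qed.

Lemma ip_scalarl c : scalar (ip^~ c).
Proof. by case: courant => _ [ipL _] k a b; apply: ipL. Qed.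

Lemma ip_scalarr c : scalar (ip c).
Proof. by move=> k a b; rewrite !(ipC c) ip_scalarl. Qed.

Lemma ipDr c : {morph ip c : x y / x + y}.
Proof. exact: linear_forD (ip_scalarr c). Qed.

Lemma ip0l c : ip 0 c = 0.
Proof. exact: additive0 (linear_forD (ip_scalarl c)). Qed.

Lemma ip0r c : ip c 0 = 0.
Proof. exact: additive0 (ipDr c). Qed.

Lemma ipZr c k x : ip c (k *: x) = k * ip c x.
Proof. by rewrite (scalable_linear (ip_scalarr c)). Qed.

Lemma frameE x : x = \sum_(i < n) ip (f i) x *: e i.
Proof. by case: courant => _ [_ [frame _]]; apply: frame. Qed.

Lemma ip_nondeg z : (forall c, ip z c = 0) -> z = 0.
Proof. by move=> z0; rewrite (frameE z) big1 // => i _; rewrite ipC z0 scale0r. Qed.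

Lemma brDl c : {morph br^~ c : x y / x + y}.
Proof.
by case: courant => _ [_ [_ [_ [_ [brL _]]]]] x y; have := brL 1 x y c; rewrite !scale1r.
Qed.

Lemma brDr c : {morph br c : x y / x + y}.
Proof.
by case: courant => _ [_ [_ [_ [_ [_ [brR _]]]]]] x y; have := brR 1 x y c; rewrite !scale1r.
Qed.

Lemma br0l c : br 0 c = 0.
Proof. exact: additive0 (brDl c). Qed.

Lemma br0r c : br c 0 = 0.
Proof. exact: additive0 (brDr c). Qed.

Lemma rhoD a : {morph rho a : x y / x + y}.
Proof. by case: courant => _ [_ [_ [rhoV _]]]; case: (rhoV a). Qed.

Lemma divD : {morph div : x y / x + y}.
Proof. by move=> x y; case: div_op. Qed.

Lemma D_linearl a : linear (D^~ a).
Proof. by case: connection => DL _ _ _ k b b'; apply: DL. Qed.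

Lemma DrD b : {morph D b : x y / x + y}.
Proof. by move=> x y; case: connection. Qed.

Lemma DrZ b k a : D b (k *: a) = k *: D b a + rho b k *: a.
Proof. by case: connection. Qed.

Lemma D_metric c a b : rho c (ip a b) = ip (D c a) b + ip a (D c b).
Proof. by case: connection. Qed.

Lemma DlD a : {morph D^~ a : x y / x + y}.
Proof. exact: linear_forD (D_linearl a). Qed.

Lemma Dl0 a : D 0 a = 0.
Proof. exact: additive0 (DlD a). Qed.

Lemma Dr0 b : D b 0 = 0.
Proof. exact: additive0 (DrD b). Qed.

Lemma DlZ k b a : D (k *: b) a = k *: D b a.
Proof. by rewrite (scalable_linear (D_linearl a)). Qed.

Lemma linear_frameE (A : X -> X) : linear A ->
  forall x, A x = \sum_(i < n) ip (f i) x *: A (e i).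
Proof.
move=> AL x; rewrite {1}(frameE x) (additive_sum (linear_forD AL)).
by apply: eq_bigr => i _; apply: scalable_linear.
Qed.

Lemma eq_frame_trace (A B : X -> X) : A =1 B -> tr A = tr B.
Proof. by move=> AB; apply: eq_bigr => i _; rewrite AB. Qed.

Lemma frame_traceD (A B : X -> X) : tr (fun c => A c + B c) = tr A + tr B.
Proof. by rewrite -big_split; apply: eq_bigr => i _; rewrite ipDr. Qed.

Lemma frame_traceN (A : X -> X) : tr (fun c => - A c) = - tr A.
Proof.
by rewrite -sumrN; apply: eq_bigr => i _; rewrite (additiveN (ipDr _)).
Qed.

Lemma frame_traceB (A B : X -> X) : tr (fun c => A c - B c) = tr A - tr B.
Proof. by rewrite frame_traceD frame_traceN. Qed.

Lemma frame_trace0 : tr (fun=> 0) = 0.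
Proof. by rewrite /frame_trace big1 // => i _; rewrite ip0r. Qed.

Lemma frame_trace_compE (A B : X -> X) : linear A ->
  tr (fun c => A (B c))
  = \sum_(i < n) \sum_(j < n) ip (f j) (B (e i)) * ip (f i) (A (e j)).
Proof.
move=> AL; apply: eq_bigr => i _.
by rewrite (linear_frameE AL) (additive_sum (ipDr _)); apply: eq_bigr => j _; rewrite ipZr.
Qed.

Lemma frame_traceC (A B : X -> X) : linear A -> linear B ->
  tr (fun c => A (B c)) = tr (fun c => B (A c)).
Proof.
move=> AL BL; rewrite !frame_trace_compE // exchange_big /=.
by apply: eq_bigr => i _; apply: eq_bigr => j _; rewrite mulrC.
Qed.

(* Differentiate the frame identity x = sum_i <f_i, x> e_i along a. *)
Lemma D_frame a x :
  \sum_(i < n) ip (D a (f i)) x *: e i = - \sum_(i < n) ip (f i) x *: D a (e i).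
Proof.
apply/eqP; rewrite -addr_eq0; apply/eqP.
have Dx : D a x = \sum_(i < n) ip (f i) x *: D a (e i)
                  + \sum_(i < n) ip (D a (f i)) x *: e i + D a x.
  rewrite {1}(frameE x) (additive_sum (DrD a)) [X in _ + X](frameE (D a x)).
  rewrite -!big_split; apply: eq_bigr => i _ /=.
  by rewrite DrZ D_metric scalerDl addrA.
by rewrite addrC; apply: (addIr (D a x)); rewrite add0r -Dx.
Qed.

Lemma frame_trace_D a (T : X -> X) : linear T ->
  tr (fun c => D a (T c)) = rho a (tr T) + tr (fun c => T (D a c)).
Proof.
move=> TL.
have shifted : tr (fun c => T (D a c)) = - \sum_(i < n) ip (D a (f i)) (T (e i)).
  transitivity (- \sum_(j < n) ip (f j) (\sum_(i < n) ip (D a (f i)) (T (e j)) *: e i)).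
    rewrite frame_trace_compE // exchange_big /= -sumrN; apply: eq_bigr => j _.
    rewrite D_frame (additiveN (ipDr _)) (additive_sum (ipDr _)) opprK.
    by apply: eq_bigr => i _; rewrite ipZr mulrC.
  congr (- _); under [RHS]eq_bigr => i _
    do rewrite (linear_frameE TL (e i)) (additive_sum (ipDr _)).
  rewrite [RHS]exchange_big /=; apply: eq_bigr => j _; rewrite (additive_sum (ipDr _)).
  by apply: eq_bigr => i _; rewrite !ipZr mulrC.
rewrite shifted /frame_trace (additive_sum (rhoD a)) -sumrN -big_split /=.
by apply: eq_bigr => i _; rewrite D_metric [_ + ip (f i) _]addrC addrK.
Qed.

Lemma naive_curv0 x z : naive_curv br D x 0 z = 0.
Proof. by rewrite /naive_curv !Dl0 Dr0 br0r Dl0 !subr0. Qed.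

Lemma naive_curvDl x x' a z :
  naive_curv br D (x + x') a z = naive_curv br D x a z + naive_curv br D x' a z.
Proof. by rewrite /naive_curv !DlD DrD brDl DlD opprD addrACA opprD [LHS]addrACA. Qed.

Lemma naive_curvDr x a z z' :
  naive_curv br D x a (z + z') = naive_curv br D x a z + naive_curv br D x a z'.
Proof. by rewrite /naive_curv !DrD opprD addrACA opprD [LHS]addrACA. Qed.

Lemma torsion3_0l b c : torsion3 ip br D 0 b c = 0.
Proof. by rewrite /torsion3 Dl0 !Dr0 br0l ip0r !subr0 ip0l addr0. Qed.

Lemma torsion3_0m a c : torsion3 ip br D a 0 c = 0.
Proof. by rewrite /torsion3 Dl0 Dr0 br0r !subr0 !ip0l addr0. Qed.

Lemma pplus_add_pminus (G : X -> X) x : pplus G x + pminus G x = x.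
Proof. by rewrite /pplus /pminus -scalerDr addrACA subrr addr0 scale_half_double. Qed.

Lemma pplus_id (G : X -> X) y : G y = y -> pplus G y = y.
Proof. by move=> Gy; rewrite /pplus Gy scale_half_double. Qed.

Lemma pminus_id (G : X -> X) y : G y = - y -> pminus G y = y.
Proof. by move=> Gy; rewrite /pminus Gy opprK scale_half_double. Qed.

Lemma pminus_eq0 (G : X -> X) y : G y = y -> pminus G y = 0.
Proof. by move=> Gy; rewrite /pminus Gy subrr scaler0. Qed.

Lemma pplus_eq0 (G : X -> X) y : G y = - y -> pplus G y = 0.
Proof. by move=> Gy; rewrite /pplus Gy subrr scaler0. Qed.

Definition adapted (G : X -> X) :=
  [/\ generalized_metric ip G, metric_connection G D & pure_type_torsion ip br G D].

Section AdaptedMetric.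
Variable G : X -> X.
Hypothesis adaptedG : adapted G.
Local Notation Pp := (pplus G).
Local Notation Pm := (pminus G).

Lemma G_linear : linear G.
Proof. by case: adaptedG => -[GL _ _] _ _ k a b; apply: GL. Qed.

Lemma G_selfadjoint a b : ip (G a) b = ip a (G b).
Proof. by case: adaptedG => -[]. Qed.

Lemma GK : involutive G.
Proof. by case: adaptedG => -[]. Qed.

Lemma GD : {morph G : x y / x + y}.
Proof. exact: linear_forD G_linear. Qed.

Lemma GZ k x : G (k *: x) = k *: G x.
Proof. by rewrite (scalable_linear G_linear). Qed.

Lemma GN : {morph G : x / - x}.
Proof. exact: additiveN GD. Qed.

Lemma pplus_linear : linear Pp.
Proof.
move=> k x y; rewrite /pplus G_linear !scalerDr !scalerA [k * _]mulrC.
by rewrite [LHS]addrACA.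
Qed.

Lemma pminus_linear : linear Pm.
Proof.
move=> k x y; rewrite /pminus G_linear opprD !scalerDr scalerN !scalerA [k * _]mulrC.
by rewrite -scalerN [LHS]addrACA.
Qed.

Lemma pplusV x : G (Pp x) = Pp x.
Proof. by rewrite /pplus GZ GD GK addrC. Qed.

Lemma pminusV x : G (Pm x) = - Pm x.
Proof. by rewrite /pminus GZ GD GN GK -scalerN opprB addrC. Qed.

Lemma eigen_orthogonal u v : G u = u -> G v = - v -> ip u v = 0.
Proof.
move=> Gu Gv; apply: double_eq0; apply/eqP; rewrite addr_eq0; apply/eqP.
by rewrite -{1}Gu G_selfadjoint Gv (additiveN (ipDr _)).
Qed.

Lemma D_plus a b : G a = a -> G (D b a) = D b a.
Proof. by case: adaptedG => _ DG _ Ga; case: (DG a b) => + _; apply. Qed.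

Lemma D_minus a b : G a = - a -> G (D b a) = - D b a.
Proof. by case: adaptedG => _ DG _ Ga; case: (DG a b) => _; apply. Qed.

Lemma D_pplus b c : D b (Pp c) = Pp (D b c).
Proof.
rewrite -{2}(pplus_add_pminus G c) DrD (linear_forD pplus_linear).
by rewrite (pplus_id (D_plus _ (pplusV c))) (pplus_eq0 (D_minus _ (pminusV c))) addr0.
Qed.

(* Pure type torsion kills T(u, v, .) for u, v of opposite types, and
   <v, D_x u> = 0 by orthogonality of V_+ and V_-. *)
Lemma bracket_mixed u v : (G u = u /\ G v = - v) \/ (G u = - u /\ G v = v) ->
  br u v = D u v - D v u.
Proof.
move=> uv; have T0 x : torsion3 ip br D u v x = 0.
  case: adaptedG => _ _ ->; case: uv => -[Gu Gv].
    by rewrite (pplus_eq0 Gv) (pminus_eq0 Gu) torsion3_0m torsion3_0l addr0.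
  by rewrite (pplus_eq0 Gu) (pminus_eq0 Gv) torsion3_0l torsion3_0m addr0.
have Dv0 x : ip v (D x u) = 0.
  case: uv => -[Gu Gv]; first by rewrite ipC eigen_orthogonal ?D_plus.
  by rewrite eigen_orthogonal ?D_minus.
apply/eqP; rewrite eq_sym -subr_eq0; apply/eqP/ip_nondeg => x.
by have := T0 x; rewrite /torsion3 Dv0 addr0.
Qed.

Lemma bracket_mixedC u v : (G u = u /\ G v = - v) \/ (G u = - u /\ G v = v) ->
  br v u = - br u v.
Proof.
move=> uv; rewrite (bracket_mixed uv) bracket_mixed ?opprB //.
by case: uv => -[Gu Gv]; [right | left].
Qed.

(* tr M = tr (P_+ M P_-) = tr (M P_- P_+) = 0. *)
Lemma frame_trace_plus_minus0 (M : X -> X) : linear M ->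
  (forall c, G (M c) = M c) -> (forall c, M (Pm c) = M c) -> tr M = 0.
Proof.
move=> ML MV MPm.
have MPmL : linear (fun c => M (Pm c)) by move=> k x y; rewrite pminus_linear ML.
rewrite (eq_frame_trace (B := fun c => Pp (M (Pm c)))); last first.
  by move=> c; rewrite MPm pplus_id.
rewrite (frame_traceC pplus_linear MPmL) (eq_frame_trace (B := fun=> 0)) ?frame_trace0 //.
by move=> c; rewrite (pminus_eq0 (pplusV c)) (additive0 (linear_forD ML)).
Qed.

Lemma div_pplus y : G y = y -> div y = tr (fun c => D (Pp c) y).
Proof.
move=> Gy; rewrite D_div (eq_frame_trace (B := fun c => D (Pp c) y + D (Pm c) y)).
  rewrite frame_traceD [X in _ + X]frame_trace_plus_minus0 ?addr0 //.
  - by move=> k x z; rewrite pminus_linear D_linearl.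
  - by move=> c; rewrite D_plus.
  - by move=> c; rewrite pminus_id ?pminusV.
by move=> c; rewrite -DlD pplus_add_pminus.
Qed.

Lemma total_ricci_mixedE a b : G a = - a -> G b = b ->
  total_ricci ip br e f G D a b
  = div (Pp (br a b)) - rho a (div b) - tr (fun c => D (D (Pp c) a) b).
Proof.
move=> Ga Gb.
have Dab : D a b = Pp (br a b).
  rewrite (bracket_mixed (or_intror (conj Ga Gb))) (additiveB (linear_forD pplus_linear)).
  by rewrite (pplus_id (D_plus _ Gb)) (pplus_eq0 (D_minus _ Ga)) subr0.
have Dc_b_linear : linear (fun c => D (Pp c) b).
  by move=> k x y; rewrite pplus_linear D_linearl.
rewrite /total_ricci (eq_frame_trace (B := fun c => D (Pp c) (Pp (br a b))
    - D a (D (Pp c) b) - (D (D (Pp c) a) b - D (Pp (D a c)) b))); last first.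
  move=> c; rewrite /total_curv (pminus_id Ga) (pplus_eq0 Ga) naive_curv0 addr0.
  rewrite /naive_curv (bracket_mixed (or_introl (conj (pplusV c) Ga))).
  by rewrite D_pplus (additiveB (DlD b)) Dab.
rewrite !frame_traceB -(div_pplus (pplusV _)) (frame_trace_D a Dc_b_linear).
by rewrite -(div_pplus Gb); ring.
Qed.

Lemma naive_curv_mixedZ k x a z : G x = - x -> G a = a ->
  naive_curv br D (k *: x) a z = k *: naive_curv br D x a z.
Proof.
move=> Gx Ga.
have Gkx : G (k *: x) = - (k *: x) by rewrite GZ Gx scalerN.
rewrite /naive_curv (bracket_mixed (or_intror (conj Gkx Ga))).
rewrite (bracket_mixed (or_intror (conj Gx Ga))) !DlZ !DrZ !(additiveB (DlD z)) DlD !DlZ.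
rewrite !scalerBr opprD addrA !opprB [k *: D (D a x) z + _]addrC.
by rewrite -[rho a k *: _ + _ - _]addrA subrKA.
Qed.

Lemma total_ricci_plus0 a b : G a = a -> G b = b -> total_ricci ip br e f G D a b = 0.
Proof.
move=> Ga Gb; rewrite /total_ricci.
rewrite (eq_frame_trace (B := fun c => naive_curv br D (Pm c) a b)); last first.
  by move=> c; rewrite /total_curv (pminus_eq0 Ga) (pplus_id Ga) naive_curv0 add0r.
apply: frame_trace_plus_minus0.
- by move=> k x y; rewrite pminus_linear naive_curvDl (naive_curv_mixedZ _ _ (pminusV x) Ga).
- by move=> c; rewrite /naive_curv !(additiveB GD) !(D_plus _ (D_plus _ Gb)) !(D_plus _ Gb).
- by move=> c; rewrite (pminus_id (pminusV c)).
Qed.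

End AdaptedMetric.

Lemma pplusN (G : X -> X) x : pplus (fun y => - G y) x = pminus G x.
Proof. by []. Qed.

Lemma pminusN (G : X -> X) x : pminus (fun y => - G y) x = pplus G x.
Proof. by rewrite /pminus /pplus opprK. Qed.

Lemma adaptedN (G : X -> X) : adapted G -> adapted (fun x => - G x).
Proof.
move=> adG; have [_ _ pureG] := adG; split; first split.
- by move=> k a b; rewrite (G_linear adG) scalerN opprD.
- move=> a b; rewrite (additiveN (linear_forD (ip_scalarl b))) (additiveN (ipDr a)).
  by rewrite G_selfadjoint.
- by move=> a; rewrite (GN adG) opprK GK.
- move=> a b; split=> Ga.
    by rewrite (D_minus adG _ (canRL opprK Ga)) opprK.
  by rewrite (D_plus adG _ (oppr_inj Ga)).
- by move=> a b c; rewrite pureG !pplusN !pminusN addrC.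
Qed.

Lemma total_ricciN (G : X -> X) a b :
  total_ricci ip br e f (fun x => - G x) D a b = total_ricci ip br e f G D a b.
Proof. by apply: eq_frame_trace => c; rewrite /total_curv !pplusN !pminusN addrC. Qed.

Lemma total_ricci_minus0 (G : X -> X) a b : adapted G -> G a = - a -> G b = - b ->
  total_ricci ip br e f G D a b = 0.
Proof.
move=> adG Ga Gb; rewrite -total_ricciN.
by apply: (total_ricci_plus0 (adaptedN adG)); rewrite /= ?Ga ?Gb opprK.
Qed.

(* The trace terms of Ric(a, b) and Ric(b, a) agree by tr (AB) = tr (BA). *)
Lemma total_ricci_mixed_skew (G : X -> X) a b : adapted G -> G a = - a -> G b = b ->
  total_ricci ip br e f G D a b - total_ricci ip br e f G D b a
  = div (br a b) - rho a (div b) + rho b (div a).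
Proof.
move=> adG Ga Gb.
have Gb' : - G b = - b by rewrite Gb.
have Ga' : - G a = a by rewrite Ga opprK.
rewrite (total_ricci_mixedE adG Ga Gb) -(total_ricciN G b a).
rewrite (total_ricci_mixedE (adaptedN adG) Gb' Ga') pplusN.
rewrite (bracket_mixedC adG (or_intror (conj Ga Gb))).
rewrite (additiveN (linear_forD (pminus_linear adG))) (additiveN divD).
have div_split : div (br a b) = div (pplus G (br a b)) + div (pminus G (br a b)).
  by rewrite -divD pplus_add_pminus.
have traces : tr (fun c => D (D (pplus G c) a) b) = tr (fun c => D (D (pminus G c) b) a).
  have AL : linear (fun c => D (pplus G c) a).
    by move=> k x y; rewrite (pplus_linear adG) D_linearl.
  have BL : linear (fun c => D (pminus G c) b).
    by move=> k x y; rewrite (pminus_linear adG) D_linearl.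
  rewrite (eq_frame_trace (B := fun c => D (pminus G (D (pplus G c) a)) b)).
    rewrite (frame_traceC BL AL); apply: eq_frame_trace => c.
    by rewrite (pplus_id (D_plus adG _ Gb)).
  by move=> c; rewrite (pminus_id (D_minus adG _ Ga)).
rewrite traces div_split; ring.
Qed.

Lemma total_ricci_split (G : X -> X) a b : adapted G ->
  total_ricci ip br e f G D a b
  = total_ricci ip br e f G D (pminus G a) (pplus G b)
    + total_ricci ip br e f G D (pplus G a) (pminus G b).
Proof.
move=> adG.
have splitl x y : total_ricci ip br e f G D x y
    = total_ricci ip br e f G D (pplus G x) y + total_ricci ip br e f G D (pminus G x) y.
  rewrite /total_ricci -frame_traceD; apply: eq_frame_trace => c.
  rewrite /total_curv (pminus_eq0 (pplusV adG x)) (pplus_id (pplusV adG x)).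
  rewrite (pplus_eq0 (pminusV adG x)) (pminus_id (pminusV adG x)).
  by rewrite !naive_curv0 addr0 add0r addrC.
have splitr x y : total_ricci ip br e f G D x y
    = total_ricci ip br e f G D x (pplus G y) + total_ricci ip br e f G D x (pminus G y).
  rewrite /total_ricci -frame_traceD; apply: eq_frame_trace => c.
  by rewrite /total_curv -[in LHS](pplus_add_pminus G y) !naive_curvDr addrACA.
rewrite splitl splitr [total_ricci _ _ _ _ _ _ (pminus G a) b]splitr.
rewrite (total_ricci_plus0 adG (pplusV adG a) (pplusV adG b)).
rewrite (total_ricci_minus0 adG (pminusV adG a) (pminusV adG b)).
by rewrite add0r addr0 addrC.
Qed.

Lemma compatible_of_total_ricci_sym (G : X -> X) : adapted G ->
  (forall a b, total_ricci ip br e f G D a b = total_ricci ip br e f G D b a) ->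
  compatible_pair rho br G div.
Proof.
move=> adG sym a b [[Ga Gb]|[Ga Gb]].
  by rewrite -(total_ricci_mixed_skew adG Ga Gb) sym subrr.
have := total_ricci_mixed_skew adG Gb Ga; rewrite sym subrr => /esym skew0.
rewrite (bracket_mixedC adG (or_intror (conj Gb Ga))) (additiveN divD).
by apply/eqP; rewrite -oppr_eq0 -skew0; apply/eqP; ring.
Qed.

Lemma total_ricci_sym_of_compatible (G : X -> X) : adapted G ->
  compatible_pair rho br G div ->
  forall a b, total_ricci ip br e f G D a b = total_ricci ip br e f G D b a.
Proof.
move=> adG compat a b.
have mixed_sym x y : G x = - x -> G y = y ->
    total_ricci ip br e f G D x y = total_ricci ip br e f G D y x.
  move=> Gx Gy; apply/eqP; rewrite -subr_eq0 (total_ricci_mixed_skew adG Gx Gy).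
  by apply/eqP/compat; left.
rewrite (total_ricci_split a b adG) (total_ricci_split b a adG).
rewrite (mixed_sym (pminus G a) (pplus G b)) ?(pminusV adG) ?(pplusV adG) //.
by rewrite (mixed_sym (pminus G b) (pplus G a)) ?(pminusV adG) ?(pplusV adG) // addrC.
Qed.

End CourantAlgebroid.

Theorem theorem4p6 (R : realType) (C : comAlgType R) (X : lmodType C)
  (ip : X -> X -> C) (rho : X -> C -> C) (br : X -> X -> X)
  (n : nat) (e f : 'I_n -> X)
  (G : X -> X) (div : X -> C) (D : X -> X -> X) :
  courant_algebroid ip rho br e f ->
  generalized_metric ip G ->
  divergence_op rho div ->
  gen_connection ip rho D ->
  metric_connection G D ->
  has_divergence ip e f D div ->
  pure_type_torsion ip br G D ->
  ((forall a b, total_ricci ip br e f G D a b = total_ricci ip br e f G D b a)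
   <-> compatible_pair rho br G div).
Proof.
move=> courant metricG div_op connection metricD D_div pureT.
have adG : adapted ip br D G by split.
split.
- exact: (compatible_of_total_ricci_sym courant div_op connection D_div adG).
- exact: (total_ricci_sym_of_compatible courant div_op connection D_div adG).
Qed.
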